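(* Let $X$ be a finite connected simplicial complex, $\hat X$ its first barycentric subdivision, and $\delta$ a cellular perversity. Let $\hat\Delta,\hat\Delta'$ be simplices of $\hat X$ with $\hat\Delta$ a codimension-one face of $\hat\Delta'$, and suppose $\hat\Delta\subseteq{}^{-\delta}\Delta$ and $\hat\Delta'\subseteq{}^{-\delta}\Delta'$ for simplices $\Delta,\Delta'$ of $X$. Then $\Delta\leftrightarrow\Delta'$ and $\Delta\ge\Delta'$ in $\Lambda(X,\delta)$.
   Context: Simplices are open; $\Delta\leftrightarrow\Delta'$ means one is a face of the other. Cellular perversity: $\delta:\mathbb Z_{\ge0}\to\mathbb Z$, $\delta(0)=0$, bijective from each $\{0,\dots,k\}$ onto an interval $\{a,\dots,a+k\}$, $a\le0$; $\delta(\Delta)=\delta(\dim\Delta)$. A simplex $\hat\Delta$ of $\hat X$ has vertices the barycenters $c_0,\dots,c_s$ of simplices $\Delta_0,\dots,\Delta_s$ of $X$; $\max_{-\delta}\hat\Delta$ is the $c_i$ with $-\delta(\Delta_i)$ maximal; ${}^{-\delta}\Delta=\bigsqcup_{\max_{-\delta}\hat\Delta=c}\hat\Delta$ for $\Delta$ with barycenter $c$. $\Lambda(X,\delta)$: $\Delta\ge\Delta'$ iff there is a chain $\Delta=\Delta_0,\dots,\Delta_r=\Delta'$ ($r\ge0$) with $\Delta_i\leftrightarrow\Delta_{i+1}$, $\delta(\Delta_i)=\delta(\Delta_{i+1})+1$. *)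

From mathcomp Require Import all_boot all_order all_algebra.
Set Implicit Arguments. Unset Strict Implicit. Unset Printing Implicit Defensive.
Import Order.TTheory GRing.Theory Num.Theory.

Section Defs.
Variable V : finType.

Definition simplicial_complex (K : {set {set V}}) : Prop :=
  (forall s, s \in K -> s != set0) /\
  (forall s t : {set V}, s \in K -> t \subset s -> t != set0 -> t \in K).

Definition vertex_of (K : {set {set V}}) (v : V) : bool := [set v] \in K.
Definition edge_rel (K : {set {set V}}) : rel V := fun u v => [set u; v] \in K.

Definition sc_connected (K : {set {set V}}) : Prop :=
  forall u v, vertex_of K u -> vertex_of K v -> connect (edge_rel K) u v.

Definition sdim (s : {set V}) : nat := #|s|.-1.

Definition face_rel (s t : {set V}) : bool := (s \subset t) || (t \subset s).

Definition cellular_perversity (d : nat -> int) : Prop :=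
  d 0%N = 0%R /\
  forall k : nat, exists a : int, (a <= 0)%R /\
    (forall i j, (i <= k)%N -> (j <= k)%N -> d i = d j -> i = j) /\
    (forall i, (i <= k)%N -> (a <= d i <= a + k%:Z)%R) /\
    (forall z : int, (a <= z <= a + k%:Z)%R -> exists2 i, (i <= k)%N & d i = z).

Definition pdelta (d : nat -> int) (s : {set V}) : int := d (sdim s).

(* Simplices of the barycentric subdivision \hat X: nonempty chains
   Delta_0 < ... < Delta_s of simplices of X (the vertex c_i of \hat Delta
   is the barycenter of Delta_i, identified with Delta_i). *)
Definition bsimplex (K : {set {set V}}) (c : {set {set V}}) : Prop :=
  c != set0 /\ c \subset K /\
  (forall a b : {set V}, a \in c -> b \in c -> (a \subset b) || (b \subset a)).

Definition bcodim1_face (c c' : {set {set V}}) : Prop :=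
  c \subset c' /\ #|c'| = #|c|.+1.

Definition is_max_mdelta (d : nat -> int) (c : {set {set V}}) (s : {set V}) : Prop :=
  s \in c /\ forall t : {set V}, t \in c -> (- pdelta d t <= - pdelta d s)%R.

(* ^{-delta}Delta, as the set of (open) simplices of \hat X composing it:
   \hat Delta lies in ^{-delta}Delta iff max_{-delta} \hat Delta = c_Delta *)
Definition in_mdelta_star (K : {set {set V}}) (d : nat -> int)
  (c : {set {set V}}) (s : {set V}) : Prop :=
  bsimplex K c /\ is_max_mdelta d c s.

Definition lambda_step (K : {set {set V}}) (d : nat -> int) : rel {set V} :=
  fun s t => [&& s \in K, t \in K, face_rel s t &
                 pdelta d s == (pdelta d t + 1)%R].

Definition lambda_ge (K : {set {set V}}) (d : nat -> int) (s t : {set V}) : Prop :=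
  exists p : seq {set V}, path (lambda_step K d) s p /\ last s p = t.

End Defs.

(* Let D' maximise -delta over the chain c' and let D be any member of the
   subchain c.  Then D and D' are comparable (c' is a chain) and
   delta D >= delta D'.  Between comparable simplices s and t with
   delta t < delta s one can always descend by one elementary step of
   Lambda: delta is a bijection from {0, ..., n} onto an interval, so the
   value delta s - 1 is taken in some dimension k <= max(dim s, dim t), and
   a k-simplex squeezed between (or inside) s and t is comparable with both.
   Iterating until the values of delta agree ends at t, because delta is
   injective and comparable simplices of equal dimension coincide. *)

From mathcomp Require Import all_boot all_order all_algebra.
From mathcomp Require Import zify.
Import Order.TTheory GRing.Theory Num.Theory.

Set Implicit Arguments.
Unset Strict Implicit.

Section FaceRel.
Variable V : finType.
Implicit Types A B s t u : {set V}.

Lemma face_relC s t : face_rel s t = face_rel t s.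
Proof. by rewrite /face_rel orbC. Qed.

Lemma face_rel_card_eq s t : face_rel s t -> #|s| = #|t| -> s = t.
Proof.
case/orP=> [st|ts] eq_st; apply/eqP; first by rewrite eqEcard st eq_st /=.
by rewrite eq_sym eqEcard ts eq_st /=.
Qed.

Lemma exists_subset_between_card A B k :
  A \subset B -> #|A| <= k <= #|B| ->
  exists u, [/\ A \subset u, u \subset B & #|u| = k].
Proof.
move=> AB; elim: k => [|k IHk] /andP[Ak kB].
  by exists A; split=> //; lia.
have [eq_Ak | neq_Ak] := eqVneq #|A| k.+1; first by exists A.
have [u [Au uB card_u]] : exists u, [/\ A \subset u, u \subset B & #|u| = k].
  by apply: IHk; lia.
have /properP[_ [x xB xNu]] : u \proper B by rewrite properEcard uB; lia.
exists (x |: u); split.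
- exact: subset_trans Au (subsetUr _ _).
- by rewrite subUset sub1set xB.
- by rewrite cardsU1 xNu card_u.
Qed.

Lemma exists_face_rel_card s t k : face_rel s t -> k <= maxn #|s| #|t| ->
  exists u, [/\ (u \subset s) || (u \subset t), #|u| = k,
                face_rel u s & face_rel u t].
Proof.
wlog st : s t / s \subset t.
  move=> sym fst; case/orP: (fst) => [st | ts]; first exact: sym.
  rewrite maxnC face_relC in fst *.
  by case/(sym _ _ ts fst)=> u [uts cu us ut]; exists u; rewrite orbC.
move=> _; rewrite (maxn_idPr (subset_leq_card st)) => kt.
have [le_ks | lt_sk] := leqP k #|s|.
  have [|u [_ us cu]] := exists_subset_between_card (k := k) (sub0set s).
    by rewrite cards0.
  by exists u; split; rewrite /face_rel ?us ?(subset_trans us st).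
have [|u [su ut cu]] := exists_subset_between_card (k := k) st.
  by rewrite (ltnW lt_sk) kt.
by exists u; split; rewrite /face_rel ?su ?ut ?orbT.
Qed.

End FaceRel.

Section Perversity.
Variable d : nat -> int.
Hypothesis hd : cellular_perversity d.

Lemma cellular_perversity_inj : injective d.
Proof.
move=> i j eq_ij; have [_ [_ [inj _]]] := hd.2 (maxn i j).
exact: inj (leq_maxl i j) (leq_maxr i j) eq_ij.
Qed.

Lemma cellular_perversity_pred i j : (d j < d i)%R ->
  exists2 k, k <= maxn i j & d k = (d i - 1)%R.
Proof.
move=> lt_ji; have [a [_ [_ [bnd onto]]]] := hd.2 (maxn i j).
have := bnd i (leq_maxl i j); have := bnd j (leq_maxr i j).
by move=> bj bi; apply: onto; lia.
Qed.

End Perversity.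

Section Lambda.
Variables (V : finType) (K : {set {set V}}) (d : nat -> int).
Hypothesis hK : simplicial_complex K.
Hypothesis hd : cellular_perversity d.
Implicit Types s t u : {set V}.

Lemma card_simplex_gt0 s : s \in K -> 0 < #|s|.
Proof. by move=> /hK.1; rewrite card_gt0. Qed.

Lemma lambda_ge_refl s : lambda_ge K d s s.
Proof. by exists [::]. Qed.

Lemma lambda_ge_step s u t :
  lambda_step K d s u -> lambda_ge K d u t -> lambda_ge K d s t.
Proof. by move=> su [p [up <-]]; exists (u :: p); rewrite /= su up. Qed.

Lemma face_rel_pdelta_eq s t : s \in K -> t \in K -> face_rel s t ->
  pdelta d s = pdelta d t -> s = t.
Proof.
move=> sK tK st /(cellular_perversity_inj hd) eq_dim.
apply: face_rel_card_eq => //.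
by move: eq_dim (card_simplex_gt0 sK) (card_simplex_gt0 tK); rewrite /sdim; lia.
Qed.

Lemma lambda_step_toward s t : s \in K -> t \in K -> face_rel s t ->
  (pdelta d t < pdelta d s)%R ->
  exists u, [/\ u \in K, lambda_step K d s u, face_rel u t &
                pdelta d u = (pdelta d s - 1)%R].
Proof.
move=> sK tK st lt_ts.
have [k le_k dk] := cellular_perversity_pred hd lt_ts.
have [|u [u_sub cu us ut]] := exists_face_rel_card (k := k.+1) st.
  by move: le_k (card_simplex_gt0 sK) (card_simplex_gt0 tK); rewrite /sdim; lia.
have uK : u \in K.
  by case/orP: u_sub => sub_u; apply: (hK.2 _ _ _ sub_u); rewrite // -card_gt0 cu.
have du : pdelta d u = (pdelta d s - 1)%R by rewrite /pdelta /sdim cu.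
exists u; split=> //.
by rewrite /lambda_step sK uK face_relC us du subrK /=.
Qed.

Lemma lambda_ge_face_rel s t : s \in K -> t \in K -> face_rel s t ->
  (pdelta d t <= pdelta d s)%R -> lambda_ge K d s t.
Proof.
move=> sK tK st le_ts.
have [N eN] : exists N : nat, (pdelta d s - pdelta d t)%R = Posz N.
  by exists `|pdelta d s - pdelta d t|%N; rewrite gez0_abs ?subr_ge0.
elim: N s sK st {le_ts} eN => [|N IHN] s sK st eN.
  have -> : s = t by apply: face_rel_pdelta_eq sK tK st _; lia.
  exact: lambda_ge_refl.
have [|u [uK su ut du]] := lambda_step_toward sK tK st; first by lia.
by apply: lambda_ge_step su (IHN u uK ut _); lia.
Qed.

End Lambda.

Theorem lemma3p2p2 (V : finType) (K : {set {set V}}) (d : nat -> int)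
  (hK : simplicial_complex K) (hconn : sc_connected K)
  (hd : cellular_perversity d)
  (c c' : {set {set V}}) (D D' : {set V})
  (hc : bsimplex K c) (hc' : bsimplex K c') (hface : bcodim1_face c c')
  (hD : D \in K) (hD' : D' \in K)
  (hcD : in_mdelta_star K d c D) (hcD' : in_mdelta_star K d c' D') :
  face_rel D D' /\ lambda_ge K d D D'.
Proof.
have [_ [Dc _]] := hcD; have [_ [D'c' D'_max]] := hcD'.
have Dc' : D \in c' := subsetP hface.1 D Dc.
have DD' : face_rel D D' by apply: hc'.2.2.
split=> //; apply: lambda_ge_face_rel => //.
by rewrite -lerN2; apply: D'_max.
Qed.
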